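(* Let $\lambda\in(0,1)$ and $\omega\in(0,1]$ be fixed with $\omega\le (1-\lambda)/\lambda$. The capacity of the symmetric network coding channel $\mathrm{SNC}(\lambda,\omega)$ is $$C(\lambda,\omega)=1-\lambda-\omega+\lambda\omega^2 .$$
   Context: Fix a prime power $q$ and the finite field $\mathbb{F}_q$. For an integer $N$ let $\ell=\lambda N$ and $m=N-\ell$ (considered along values of $N$ for which $\ell$ and $\ell\omega$ are integers). The symmetric network coding channel $\mathrm{SNC}(\lambda,\omega)$ has as input an $\ell\times m$ matrix $\underline{x}$ over $\mathbb{F}_q$ and as output $\underline{y}=\underline{x}+\underline{z}$, where $\underline{z}$ is chosen, independently of $\underline{x}$, uniformly at random among all $\ell\times m$ matrices over $\mathbb{F}_q$ of rank exactly $\ell\omega$. Its capacity is defined as $$C(\lambda,\omega)=\lim_{N\to\infty,\ \ell=\lambda N}\frac{1}{N\ell}\sup_{P_{\underline{X}}} I(\underline{X};\underline{Y}),$$ where the supremum is over input distributions, $I$ is mutual information measured in base-$q$ logarithms, and $\underline{Y}$ is the channel output for input $\underline{X}$. *)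

From HB Require Import structures.
From mathcomp Require Import all_boot all_order all_algebra all_field.
From mathcomp Require Import all_classical all_reals all_analysis.
Set Implicit Arguments. Unset Strict Implicit. Unset Printing Implicit Defensive.
Import Order.TTheory GRing.Theory Num.Theory.
Local Open Scope classical_set_scope.
Local Open Scope ring_scope.

Section SNC.
Variables (R : realType) (F : finFieldType) (l m k : nat).

Definition logq (x : R) : R := ln x / ln (#|F|%:R).

Definition rank_set : {set 'M[F]_(l, m)} := [set z | \rank z == k].

(* channel transition probability W(y | x) = P(Z = y - x), Z uniform on rank_set *)
Definition snc_W (y x : 'M[F]_(l, m)) : R :=
  if \rank (y - x) == k then (#|rank_set|%:R)^-1 else 0.

Definition is_distr (P : {ffun 'M[F]_(l, m) -> R}) : Prop :=
  (forall x, 0 <= P x) /\ \sum_x P x = 1.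

Definition out_distr (P : {ffun 'M[F]_(l, m) -> R}) (y : 'M[F]_(l, m)) : R :=
  \sum_x P x * snc_W y x.

Definition mutual_info (P : {ffun 'M[F]_(l, m) -> R}) : R :=
  \sum_x \sum_y
    (if P x * snc_W y x == 0 then 0
     else P x * snc_W y x * logq (snc_W y x / out_distr P y)).

Definition snc_sup_info : R := sup [set mutual_info P | P in is_distr].

End SNC.

From HB Require Import structures.
From mathcomp Require Import all_boot all_order all_algebra all_field.
From mathcomp Require Import all_classical all_reals all_analysis.
From mathcomp Require Import zify ring lra.
Set Implicit Arguments. Unset Strict Implicit. Unset Printing Implicit Defensive.
Import Order.TTheory GRing.Theory Num.Theory.
Local Open Scope ring_scope.

(* The noise is independent of the input and uniform on the set of s rank-k
   matrices, so I(X;Y) = H(Y) - log_q s; the uniform input makes Y uniform and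
   gives the maximum lm - log_q s.  Counting full-rank factorisations modulo
   GL_k shows q^(k(l+m-k)-k) <= s <= q^(k(l+m-k)+k), and
   lm - k(l+m-k) = (l-k)(m-k), so the normalised capacity is within
   k/(N l) <= 1/N of (1-lam)(1-om) - lam om (1-om) = 1 - lam - om + lam om^2. *)

Lemma bin2_add_bin2 k : ('C(k, 2) + 'C(k, 2) + k = k * k)%N.
Proof. by elim: k => // k IH; rewrite binS bin1; nia. Qed.

Section RankCounting.
Variable F : finFieldType.
Local Notation q := #|F|.
Local Notation GL k := [set A : 'M[F]_k | A \in unitmx].

Lemma card_unitmx_ge k : (q ^ (k * k) <= #|GL k| * q ^ k)%N.
Proof.
case: k => [|k].
  by rewrite muln0 expn0 muln1; apply/card_gt0P; exists 1%:M; rewrite inE unitmx1.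
have -> : #|GL k.+1| = #|('GL_k.+1[F])%g|.
  by rewrite cardsT /= card_sub; apply: eq_card => A; rewrite !inE.
have prod_ge : (q ^ 'C(k.+1, 2) <= \prod_(1 <= i < k.+2) (q ^ i - 1))%N.
  rewrite -bin2_sum expn_sum big_add1 /= !big_mkord.
  apply: leq_prod => i _; rewrite expnS.
  have q_gt1 : (1 < q)%N := card_finNzRing_gt1 F.
  have : (0 < q ^ i)%N by rewrite expn_gt0 ltnW.
  by move: (q ^ i)%N q_gt1 => t; move: q => Q; nia.
rewrite card_GL // -[(k.+1 * k.+1)%N](bin2_add_bin2 k.+1) expnD expnD.
by apply: leq_mul => //; apply: leq_mul.
Qed.

(* A rank-k matrix z factors as z = A B with B row-free, and
   (z, g) |-> (A g, g^-1 B) is injective on rank-k matrices times GL_k. *)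
Lemma card_rank_set_mul_unitmx_le l m k : (k <= m)%N ->
  (#|rank_set F l m k| * #|GL k| <= q ^ (l * k) * q ^ (k * m))%N.
Proof.
move=> km.
pose A (z : 'M[F]_(l, m)) : 'M[F]_(l, k) := col_ebase z *m pid_mx k.
pose B (z : 'M[F]_(l, m)) : 'M[F]_(k, m) := pid_mx k *m row_ebase z.
have AB z : \rank z = k -> A z *m B z = z.
  move=> rz; rewrite /A /B mulmxA -(mulmxA (col_ebase z)) mul_pid_mx !minnn.
  by rewrite -rz mulmx_ebase.
have B_free z : row_free (B z).
  by rewrite /row_free /B mxrankMfree ?rank_pid_mx // row_free_unit row_ebase_unit.
have ABg z g : g \in unitmx -> A z *m g *m (invmx g *m B z) = A z *m B z.
  by move=> ug; rewrite mulmxA mulmxK.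
pose h (p : 'M[F]_(l, m) * 'M[F]_k) := (A p.1 *m p.2, invmx p.2 *m B p.1).
rewrite -cardsX -(card_in_imset (f := h)); last first.
  move=> [z g] [z' g'] /setXP[rz ug] /setXP[rz' ug'] [e1 e2].
  rewrite !inE in rz ug rz' ug'.
  have ez : z = z'.
    by rewrite -(AB z (eqP rz)) -(AB z' (eqP rz')) -(ABg z g) // -(ABg z' g') // e1 e2.
  subst z'; congr (_, _).
  by rewrite -[g]invmxK -[g']invmxK (row_free_inj (B_free z) e2).
by apply: leq_trans (max_card _) _; rewrite card_prod !card_mx.
Qed.

(* The block matrices [g, g X; Y g, Y g X] with g invertible have rank k and
   determine (g, X, Y). *)
Lemma card_unitmx_mul_le_card_rank_set a b k :
  (#|GL k| * (q ^ (k * b) * q ^ (a * k)) <= #|rank_set F (k + a) (k + b) k|)%N.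
Proof.
pose D := finset.setX (finset.setX (GL k) [set: 'M[F]_(k, b)]) [set: 'M[F]_(a, k)].
pose f (t : 'M[F]_k * 'M[F]_(k, b) * 'M[F]_(a, k)) : 'M[F]_(k + a, k + b) :=
  col_mx 1%:M t.2 *m (t.1.1 *m row_mx 1%:M t.1.2).
have fE t : f t = block_mx t.1.1 (t.1.1 *m t.1.2) (t.2 *m t.1.1) (t.2 *m t.1.1 *m t.1.2).
  by rewrite /f mul_mx_row mulmx1 mul_col_row !mul1mx mulmxA.
have -> : (#|GL k| * (q ^ (k * b) * q ^ (a * k)) = #|D|)%N.
  by rewrite !cardsX !cardsT !card_mx mulnA.
rewrite -(card_in_imset (f := f)); last first.
  move=> [[g X] Y] [[g' X'] Y'] /setXP[/setXP[ug _] _] _.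
  rewrite !fE /= => /eq_block_mx[<- eX eY _]; rewrite inE in ug.
  by rewrite -(mulKmx ug X) eX mulKmx // -(mulmxK ug Y) eY mulmxK.
apply/subset_leq_card/fintype.subsetP => _ /imsetP[[[g X] Y] /setXP[/setXP[ug _] _] ->].
rewrite !inE in ug *; rewrite eqn_leq; apply/andP; split.
  apply: leq_trans (mxrankM_maxr _ _) _.
  by apply: leq_trans (mxrankM_maxl _ _) _; rewrite mxrank_unit.
have g_minor : g = row_mx 1%:M 0 *m f (g, X, Y) *m col_mx 1%:M 0.
  rewrite /f mulmxA mul_row_col mul0mx addr0 mulmx1 mul1mx.
  by rewrite -mulmxA mul_row_col mulmx0 addr0 !mulmx1.
rewrite -{1}(mxrank_unit ug) {1}g_minor.
exact: leq_trans (mxrankM_maxl _ _) (mxrankM_maxr _ _).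
Qed.

Lemma card_rank_set_le l m k : (k <= m)%N ->
  (#|rank_set F l m k| <= q ^ (k * (l + m - k) + k))%N.
Proof.
move=> km; have q_gt0 : (0 < q)%N by rewrite ltnW // card_finNzRing_gt1.
rewrite -(@leq_pmul2r (q ^ (k * k))) ?expn_gt0 ?q_gt0 // -expnD.
have -> : (k * (l + m - k) + k + k * k = l * k + k * m + k)%N by nia.
have GL_ge : (q ^ (k * k) <= #|GL k| * q ^ k)%N := card_unitmx_ge k.
apply: leq_trans (leq_mul (leqnn _) GL_ge) _.
by rewrite mulnA !expnD leq_mul2r card_rank_set_mul_unitmx_le ?orbT.
Qed.

Lemma card_rank_set_ge l m k : (k <= l)%N -> (k <= m)%N ->
  (q ^ (k * (l + m - k)) <= #|rank_set F l m k| * q ^ k)%N.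
Proof.
move=> kl km.
have := @card_unitmx_mul_le_card_rank_set (l - k) (m - k) k.
rewrite !subnKC // => GL_le.
have -> : (k * (l + m - k) = k * k + k * (m - k) + (l - k) * k)%N by nia.
rewrite !expnD -mulnA; apply: leq_trans (leq_mul GL_le (leqnn _)).
by rewrite mulnAC leq_mul2r card_unitmx_ge orbT.
Qed.

Lemma card_rank_set_gt0 l m k : (k <= l)%N -> (k <= m)%N ->
  (0 < #|rank_set F l m k|)%N.
Proof.
move=> kl km; rewrite lt0n; apply: contraTneq (card_rank_set_ge kl km) => ->.
by rewrite mul0n -ltnNge expn_gt0 (ltnW (card_finNzRing_gt1 F)).
Qed.

End RankCounting.

Section Logq.
Variables (R : realType) (F : finFieldType).
Local Notation q := (#|F|%:R : R).

Lemma ln_card_gt0 : 0 < ln q.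
Proof. by rewrite ln_gt0 // ltr1n card_finNzRing_gt1. Qed.

Lemma logqM (x y : R) : 0 < x -> 0 < y -> logq F (x * y) = logq F x + logq F y.
Proof. by move=> x0 y0; rewrite /logq lnM // mulrDl. Qed.

Lemma logqV (x : R) : 0 < x -> logq F x^-1 = - logq F x.
Proof. by move=> x0; rewrite /logq lnV ?posrE // mulNr. Qed.

Lemma logq_card_exp e : logq F (q ^+ e) = e%:R.
Proof.
rewrite /logq lnXn ?ltr0n ?(ltnW (card_finNzRing_gt1 F)) //.
by rewrite mulrnAl divff // gt_eqF // ln_card_gt0.
Qed.

Lemma ler_logq (x y : R) : 0 < x -> x <= y -> logq F x <= logq F y.
Proof.
move=> x0 xy; rewrite ler_pM2r ?invr_gt0 ?ln_card_gt0 // ler_ln ?posrE //.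
exact: lt_le_trans xy.
Qed.

Lemma logq_card_rank_set l m k : (k <= l)%N -> (k <= m)%N ->
  `|logq F (#|rank_set F l m k|%:R : R) - (k * (l + m - k))%:R| <= k%:R.
Proof.
move=> kl km; set s := #|rank_set F l m k|; set e := (k * (l + m - k))%N.
have s_gt0 : (0 : R) < s%:R by rewrite ltr0n card_rank_set_gt0.
have q_gt0 : (0 : R) < q by rewrite ltr0n (ltnW (card_finNzRing_gt1 F)).
have upper : logq F (s%:R : R) <= e%:R + k%:R.
  rewrite -natrD -(logq_card_exp (e + k)) ler_logq // -natrX ler_nat.
  exact: card_rank_set_le.
have lower : e%:R <= logq F (s%:R : R) + k%:R.
  rewrite -(logq_card_exp e) -(logq_card_exp k) -logqM ?exprn_gt0 //.
  by rewrite ler_logq ?exprn_gt0 // -!natrX -natrM ler_nat card_rank_set_ge.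
by rewrite ler_norml; apply/andP; split; lra.
Qed.

End Logq.

Section Entropy.
Variables (R : realType) (F : finFieldType) (T : finType).

Definition entropy (p : T -> R) : R := - \sum_t p t * logq F (p t).

(* [ln x <= x - 1] at [x = 1 / (n o)], multiplied by [o]. *)
Lemma gibbs_pointwise (n o : R) : 0 < n -> 0 <= o -> o - n^-1 <= o * (ln n + ln o).
Proof.
move=> n0; rewrite le_eqVlt => /predU1P[<-|o0].
  by rewrite mul0r sub0r oppr_le0 invr_ge0 ltW.
have no0 : 0 < (n * o)^-1 by rewrite invr_gt0 mulr_gt0.
have ln_le : ln (n * o)^-1 <= (n * o)^-1 - 1.
  by have := @le_ln1Dx _ ((n * o)^-1 - 1); rewrite subrKC; apply; lra.
rewrite lnV ?posrE ?mulr_gt0 // lnM // in ln_le.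
have := ler_wpM2l (ltW o0) ln_le.
have -> : o * ((n * o)^-1 - 1) = n^-1 - o by field; rewrite !gt_eqF.
lra.
Qed.

Lemma entropy_le_logq_card (p : T -> R) :
  (forall t, 0 <= p t) -> \sum_t p t = 1 -> entropy p <= logq F #|T|%:R.
Proof.
move=> p_ge0 p1.
have n0 : (0 : R) < #|T|%:R.
  case: (posnP #|T|) => [/card0_eq T0|]; last by rewrite ltr0n.
  by move: p1; rewrite big_pred0 // => /esym/eqP; rewrite oner_eq0.
have gibbs : 0 <= ln #|T|%:R + \sum_t p t * ln (p t).
  have : \sum_t (p t - #|T|%:R^-1) <= \sum_t p t * (ln #|T|%:R + ln (p t)).
    by apply: ler_sum => t _; apply: gibbs_pointwise.
  rewrite sumrB p1 sumr_const -[_^-1 *+ _]mulr_natr mulVf ?gt_eqF // subrr.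
  by under eq_bigr do rewrite mulrDr; rewrite big_split /= -mulr_suml p1 mul1r.
rewrite /entropy /logq.
have -> : - \sum_t p t * (ln (p t) / ln (#|F|%:R : R))
    = - (\sum_t p t * ln (p t)) / ln (#|F|%:R : R).
  by rewrite mulNr mulr_suml; congr (- _); apply: eq_bigr => t _; rewrite mulrA.
by rewrite ler_pM2r ?invr_gt0 ?ln_card_gt0 //; lra.
Qed.

Lemma entropy_uniform : (0 < #|T|)%N -> entropy (fun=> #|T|%:R^-1) = logq F #|T|%:R.
Proof.
move=> T0; rewrite /entropy sumr_const logqV ?ltr0n // mulrN mulNrn opprK.
by rewrite -mulrnAl -mulr_natr mulVf ?mul1r // pnatr_eq0 -lt0n.
Qed.
End Entropy.

Lemma sup_eq_greatest (R : realType) (S : set R) (x : R) :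
  S x -> (forall y, S y -> y <= x) -> sup S = x.
Proof.
move=> Sx S_le; apply/le_anti/andP; split; first by apply: ge_sup; [exists x|].
by apply: sup_upper_bound => //; split; [exists x | exists x].
Qed.

Section SymmetricChannel.
Variables (R : realType) (F : finFieldType) (l m k : nat).
Local Notation M := 'M[F]_(l, m).
Local Notation s := #|rank_set F l m k|.
Local Notation W := (@snc_W R F l m k).
Hypothesis rank_set_gt0 : (0 < s)%N.
Implicit Types P : {ffun M -> R}.

Lemma sum_noise : \sum_(z : M) (if \rank z == k then (s%:R : R)^-1 else 0) = 1.
Proof.
rewrite -big_mkcond /= (eq_bigl (mem (rank_set F l m k))) => [|z]; last by rewrite /= inE.
by rewrite sumr_const -[LHS]mulr_natr mulVf // pnatr_eq0 -lt0n.
Qed.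

Lemma sum_snc_W_out (x : M) : \sum_y W y x = 1.
Proof.
by rewrite (reindex_inj (addIr x)) -sum_noise; apply: eq_bigr => y _; rewrite /snc_W addrK.
Qed.

Lemma sum_snc_W_in (y : M) : \sum_x W y x = 1.
Proof.
by rewrite (reindex_inj (subrI y)) -sum_noise; apply: eq_bigr => x _; rewrite /snc_W subKr.
Qed.

Lemma snc_W_ge0 (y x : M) : 0 <= W y x.
Proof. by rewrite /snc_W; case: ifP => // _; rewrite invr_ge0 ler0n. Qed.

Lemma out_distr_ge0 P : is_distr P -> forall y, 0 <= out_distr k P y.
Proof. by move=> [P_ge0 _] y; apply: sumr_ge0 => x _; rewrite mulr_ge0 ?snc_W_ge0. Qed.

Lemma sum_out_distr P : is_distr P -> \sum_y out_distr k P y = 1.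
Proof.
move=> [_ P1]; rewrite /out_distr exchange_big -P1.
by apply: eq_bigr => x _; rewrite -mulr_sumr sum_snc_W_out mulr1.
Qed.

Lemma mutual_info_entropy P : is_distr P ->
  mutual_info k P = entropy F (out_distr k P) - logq F (s%:R : R).
Proof.
move=> P_distr; have [P_ge0 _] := P_distr.
have term x y : (if P x * W y x == 0 then 0
    else P x * W y x * logq F (W y x / out_distr k P y))
    = P x * W y x * (- logq F (s%:R : R) - logq F (out_distr k P y)).
  case: eqP => [->|PW_neq0]; first by rewrite mul0r.
  have W_s : W y x = s%:R^-1.
    by move: PW_neq0; rewrite /snc_W; case: ifP => //; rewrite mulr0.
  have PW_gt0 : 0 < P x * W y x.
    by rewrite lt_def (mulr_ge0 (P_ge0 x) (snc_W_ge0 y x)) andbT; apply/eqP.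
  have out_gt0 : 0 < out_distr k P y.
    apply: lt_le_trans PW_gt0 _; rewrite /out_distr (bigD1 x) //= lerDl.
    by apply: sumr_ge0 => x' _; rewrite mulr_ge0 ?snc_W_ge0.
  by rewrite W_s logqM ?invr_gt0 ?ltr0n // !logqV ?ltr0n.
rewrite /mutual_info; under eq_bigr do under eq_bigr do rewrite term.
rewrite exchange_big /=; under eq_bigr do rewrite -mulr_suml.
under eq_bigr do rewrite mulrBr; rewrite sumrB -mulr_suml sum_out_distr //.
by rewrite /entropy; lra.
Qed.

Lemma snc_sup_info_eq : snc_sup_info R F l m k = (l * m)%:R - logq F (s%:R : R).
Proof.
have n_gt0 : (0 < #|{: M}|)%N by rewrite card_mx expn_gt0 ltnW ?card_finNzRing_gt1.
have logq_n : logq F (#|{: M}|%:R : R) = (l * m)%:R by rewrite card_mx natrX logq_card_exp.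
pose U : {ffun M -> R} := [ffun=> #|{: M}|%:R^-1].
have U_distr : is_distr U.
  split=> [x|]; first by rewrite ffunE invr_ge0 ler0n.
  under eq_bigr do rewrite ffunE.
  by rewrite sumr_const -[_ *+ _]mulr_natr mulVf // pnatr_eq0 -lt0n.
have out_U : out_distr k U = fun=> #|{: M}|%:R^-1.
  apply/funext => y; rewrite /out_distr; under eq_bigr do rewrite ffunE.
  by rewrite -mulr_sumr sum_snc_W_in // mulr1.
apply: sup_eq_greatest.
  by exists U => //; rewrite mutual_info_entropy // out_U entropy_uniform // logq_n.
move=> _ [P P_distr <-]; rewrite mutual_info_entropy // -logq_n lerD2r.
by apply: entropy_le_logq_card; [apply: out_distr_ge0 | apply: sum_out_distr].
Qed.
End SymmetricChannel.

Theorem proposition1 (R : realType) (F : finFieldType) (lam om : R) :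
  0 < lam -> lam < 1 -> 0 < om -> om <= 1 -> om <= (1 - lam) / lam ->
  forall eps : R, 0 < eps ->
  exists N0 : nat, forall N l k : nat,
    (N0 <= N)%N -> l%:R = lam * N%:R -> k%:R = l%:R * om ->
    `| (N%:R * l%:R)^-1 * snc_sup_info R F l (N - l) k
       - (1 - lam - om + lam * om ^+ 2) | < eps.
Proof.
move=> lam_gt0 lam_lt1 om_gt0 om_le1 om_le eps eps_gt0.
exists (Num.truncn eps^-1).+1 => N l k N_ge l_eq k_eq.
have eps_N : 1 < eps * N%:R.
  rewrite -ltr_pdivrMl // mulr1; apply: lt_le_trans (truncnS_gt _) _.
  by rewrite ler_nat.
have N_gt0 : (0 : R) < N%:R by rewrite -(pmulr_rgt0 _ eps_gt0); lra.
have l_gt0 : (0 : R) < l%:R by rewrite l_eq mulr_gt0.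
have lN : (l <= N)%N by rewrite -(ler_nat R) l_eq ler_piMl // ltW.
have kl : (k <= l)%N by rewrite -(ler_nat R) k_eq ler_piMr // ltW.
have km : (k <= N - l)%N.
  have : lam * om <= 1 - lam by rewrite mulrC -ler_pdivlMr.
  by rewrite -(ler_nat R) natrB // k_eq l_eq; nra.
have := logq_card_rank_set R F kl km; rewrite subnKC //.
rewrite snc_sup_info_eq ?card_rank_set_gt0 //.
set L := logq F _ => L_near.
have -> : (N%:R * l%:R)^-1 * ((l * (N - l))%:R - L) - (1 - lam - om + lam * om ^+ 2)
    = - (L - (k * (N - k))%:R) / (N%:R * l%:R).
  by rewrite !natrM !natrB ?(leq_trans kl) // k_eq l_eq; field; rewrite !gt_eqF.
rewrite normrM normrN normfV [`|_ * _|]gtr0_norm ?mulr_gt0 // ltr_pdivrMr ?mulr_gt0 //.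
have kl_R : (k%:R : R) <= l%:R by rewrite ler_nat.
apply: le_lt_trans L_near _; nra.
Qed.
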